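(* Let $\lambda\neq 0$ and let the numbers $a_i(N;\lambda)$ ($N\ge 0$, $0\le i\le N$) be defined as in the context. Then: (i) $a_0(0;\lambda)=\frac{1}{\lambda}$, $a_0(1;\lambda)=1$, $a_1(1;\lambda)=-1$; (ii) for all $N\ge 0$, $a_0(N+1;\lambda)=(N+\lambda)_N$ and $a_{N+1}(N+1;\lambda)=(-1)^{N+1}\lambda^N (N+1)!$; (iii) for all $N\ge 1$ and $1\le k\le N$, $$a_k(N+1;\lambda)=-k\lambda\sum_{i_1=0}^{N-k+1}\bigl(N+(k+1)\lambda\bigr)_{i_1}\,a_{k-1}(N-i_1;\lambda).$$
   Context: Here $(x)_n=x(x-1)\cdots(x-n+1)$ for $n\ge 1$ and $(x)_0=1$ (falling factorial). Let $F(t)=F(t;\lambda)=\frac{1}{(1+t)^{\lambda}+1}$. The numbers $a_i(N;\lambda)$ are the coefficients for which, for every $N\ge 0$, $$\left(\frac{d}{dt}\right)^N F(t)=\frac{(-1)^N\lambda}{(1+t)^N}\sum_{i=1}^{N+1}a_{i-1}(N;\lambda)F(t)^i;$$ concretely, they are defined recursively by $a_0(0;\lambda)=1/\lambda$ and, for $N\ge 0$: $a_0(N+1;\lambda)=(N+\lambda)a_0(N;\lambda)$, $a_{N+1}(N+1;\lambda)=-(N+1)\lambda\,a_N(N;\lambda)$, and $a_{k}(N+1;\lambda)=-k\lambda\,a_{k-1}(N;\lambda)+(N+(k+1)\lambda)a_{k}(N;\lambda)$ for $1\le k\le N$. (Equivalently, $P_N(x)=\lambda\sum_{i=1}^{N+1}a_{i-1}(N;\lambda)x^i$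 satisfies $P_0(x)=x$ and $P_{N+1}(x)=NP_N(x)+\lambda(x-x^2)P_N'(x)$.) *)

From mathcomp Require Import all_boot all_order all_algebra.
Set Implicit Arguments. Unset Strict Implicit. Unset Printing Implicit Defensive.
Import Order.TTheory GRing.Theory Num.Theory.
Local Open Scope ring_scope.

Definition ffact {R : ringType} (x : R) (n : nat) : R :=
  \prod_(i < n) (x - i%:R).

(* acoef l N k = a_k(N; l), defined by the recursion of the paper;
   set to 0 outside the range 0 <= k <= N (never used there). *)
Fixpoint acoef {R : fieldType} (l : R) (N k : nat) : R :=
  match N with
  | 0 => if k == 0%N then l^-1 else 0
  | N'.+1 =>
      if k == 0%N then (N'%:R + l) * acoef l N' 0
      else if k == N'.+1 then - (N'.+1%:R * l) * acoef l N' N'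
      else if (k <= N')%N then
        - (k%:R * l) * acoef l N' k.-1 + (N'%:R + k.+1%:R * l) * acoef l N' k
      else 0
  end.

(* The recursion for a_k(N+1) has the shape u_{N+1} = -k l a_{k-1}(N) + c_N u_N with
   c_N = N + (k+1) l.  Unrolling it from N down to the diagonal N = k, where
   a_k(k) = -k l a_{k-1}(k-1) supplies the last summand, gives a sum whose i-th weight is
   c_N c_{N-1} ... c_{N-i+1} = (N + (k+1) l)_i. *)

From mathcomp Require Import all_boot all_order all_algebra.
From mathcomp Require Import ring.
Set Implicit Arguments.
Unset Strict Implicit.
Unset Printing Implicit Defensive.
Import GRing.Theory.
Local Open Scope ring_scope.

Lemma ffact0 (R : nzRingType) (x : R) : ffact x 0 = 1.
Proof. by rewrite /ffact big_ord0. Qed.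

Lemma ffactS (R : nzRingType) (x : R) n : ffact x n.+1 = x * ffact (x - 1) n.
Proof.
rewrite /ffact big_ord_recl subr0; congr (_ * _).
by apply: eq_bigr => i _; rewrite lift0 -natr1 opprD addrA addrAC.
Qed.

Section Recursion.

Variables (R : fieldType) (l : R).

Lemma acoefS0 N : acoef l N.+1 0 = (N%:R + l) * acoef l N 0.
Proof. by []. Qed.

Lemma acoefSS N : acoef l N.+1 N.+1 = - (N.+1%:R * l) * acoef l N N.
Proof. by rewrite /= eqxx. Qed.

Lemma acoefS N k : (1 <= k <= N)%N ->
  acoef l N.+1 k = - (k%:R * l) * acoef l N k.-1 + (N%:R + k.+1%:R * l) * acoef l N k.
Proof.
case: k => // k /andP[_ kN] /=.
by rewrite ifN ?kN // neq_ltn ltnS kN.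
Qed.

Hypothesis l_neq0 : l != 0.

Lemma acoefS0_ffact N : acoef l N.+1 0 = ffact (N%:R + l) N.
Proof.
elim: N => [|N IH]; first by rewrite acoefS0 ffact0 /= add0r mulfV.
by rewrite acoefS0 IH ffactS -natr1 addrAC addrK.
Qed.

Lemma acoef11 : acoef l 1 1 = -1.
Proof. by rewrite acoefSS /= mul1r mulNr mulfV. Qed.

Lemma acoefSS_fact N : acoef l N.+1 N.+1 = (-1) ^+ N.+1 * l ^+ N * (N.+1)`!%:R.
Proof.
elim: N => [|N IH]; first by rewrite acoef11 expr0 mulr1 mulN1r.
by rewrite acoefSS IH !exprS [in RHS]factS natrM; ring.
Qed.

Lemma acoef_unrolled k m : (1 <= k)%N ->
  acoef l (k + m).+1 k = - (k%:R * l) *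
    \sum_(0 <= i < m.+2) ffact ((k + m)%:R + k.+1%:R * l) i * acoef l (k + m - i) k.-1.
Proof.
case: k => // k _; elim: m => [|m IH].
  rewrite addn0 acoefS ?leqnn // acoefSS big_nat_recl // big_nat1 subn0 subn1 ffact0.
  by rewrite ffactS ffact0 mulr1 !succnK; ring.
rewrite addnS acoefS; last by rewrite /= leqW // leq_addr.
rewrite IH [in RHS]big_nat_recl // subn0 ffact0 mul1r mulrDr; congr (_ + _).
rewrite mulrCA big_distrr; congr (_ * _); apply: eq_bigr => i _.
by rewrite /= ffactS subSS mulrA -[(_ + m).+1%:R]natr1 addrAC addrK.
Qed.

End Recursion.

Theorem theorem1 (R : fieldType) (l : R) (hl : l != 0) :
  [/\ acoef l 0 0 = l^-1, acoef l 1 0 = 1, acoef l 1 1 = -1,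
      (forall N : nat,
         acoef l N.+1 0 = ffact (N%:R + l) N /\
         acoef l N.+1 N.+1 = (-1) ^+ N.+1 * l ^+ N * (N.+1)`!%:R)
    & (forall N k : nat, (1 <= N)%N -> (1 <= k <= N)%N ->
         acoef l N.+1 k =
           - (k%:R * l) *
             \sum_(0 <= i1 < (N - k + 1).+1)
                ffact (N%:R + k.+1%:R * l) i1 * acoef l (N - i1) k.-1)].
Proof.
split=> //.
- by rewrite acoefS0_ffact // ffact0.
- exact: acoef11.
- by move=> N; split; [exact: acoefS0_ffact | exact: acoefSS_fact].
move=> N k _ /andP[k_gt0 kN].
by rewrite -(subnKC kN) acoef_unrolled // addKn addn1.
Qed.
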